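(* Let $N$ be a finite set with $n=|N|\geq 2$, and let $\mathcal{D}\subseteq \mathrm{DAG}(N)$ be a facet of the family-variable polytope $P_N$ (in the sense that $\mathrm{conv}\{\eta_G : G\in\mathcal{D}\}$ is a facet of $P_N$). Then the following conditions are equivalent: (a) $\mathcal{D}$ is closed under Markov equivalence, i.e. whenever $G,H\in\mathrm{DAG}(N)$ are Markov equivalent and $G\in\mathcal{D}$, then $H\in\mathcal{D}$; (b) $\mathcal{D}$ contains every full graph over $N$; (c) $\mathcal{D}$ is score equivalent (SE).
   Context: $\mathrm{DAG}(N)$ is the set of acyclic directed graphs with node set $N$; $\mathrm{pa}_G(a)$ denotes the parent set of $a$ in $G$. Two graphs $G,H\in\mathrm{DAG}(N)$ are Markov equivalent ($G\sim H$) if they have the same adjacencies and the same immoralities (induced subgraphs $a\to c\leftarrow b$ with $a,b$ non-adjacent). A full graph is an acyclic directed graph over $N$ in which every pair of distinct nodes is adjacent (all full graphs are Markov equivalent). Let $\Upsilon=\{(a|B): a\in N,\ \emptyset\neq B\subseteq N\setminus\{a\}\}$. For $G\in\mathrm{DAG}(N)$ the family-variable vector $\eta_G\in\mathbb{R}^{\Upsilon}$ has $\eta_G(a|B)=1$ if $B=\mathrm{pa}_G(a)$ and $0$ otherwise. The family-variable polytope is $P_N=\mathrm{conv}\{\eta_G: G\in\mathrm{DAG}(N)\}$. A set $\mathcal{D}\subseteq\mathrm{DAG}(N)$ is called a face (resp. facet) of $P_N$ if $\mathrm{conv}\{\eta_G:G\in\mathcal{D}\}$ is a face (resp. facet, i.e.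 face of dimension $\dim P_N-1$) of $P_N$. A vector $o\in\mathbb{R}^{\Upsilon}$ is an SE (score equivalent) objective if $\langle o,\eta_G\rangle=\langle o,\eta_H\rangle$ whenever $G\sim H$. A face $F$ of $P_N$ is SE if there exist an SE objective $o$ and $u\in\mathbb{R}$ with $P_N\subseteq\{v:\langle o,v\rangle\le u\}$ and $F=\{v\in P_N:\langle o,v\rangle=u\}$; a set of graphs is SE if the corresponding face is SE. *)

From HB Require Import structures.
From mathcomp Require Import all_boot all_order all_algebra.
Set Implicit Arguments. Unset Strict Implicit. Unset Printing Implicit Defensive.
Import Order.TTheory GRing.Theory Num.Theory.
Local Open Scope ring_scope.

Section DAGs.
Variable N : finType.

(* A directed graph over N is given by its parent-set function:
   there is an arrow x -> y iff x \in g y. *)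
Definition graph := {ffun N -> {set N}}.

Definition arrow (g : graph) : rel N := fun x y => x \in g y.

(* acyclic: no directed cycle (including no self-loop) *)
Definition acyclicb (g : graph) : bool :=
  [forall x, forall y, arrow g x y ==> ~~ connect (arrow g) y x].

Definition DAG := {g : graph | acyclicb g}.

Definition pa (G : DAG) (a : N) : {set N} := val G a.

Definition adj (G : DAG) (a b : N) : bool := (a \in pa G b) || (b \in pa G a).

Definition immorality (G : DAG) (a c b : N) : bool :=
  [&& a \in pa G c, b \in pa G c, a != b & ~~ adj G a b].

Definition markov_equiv (G H : DAG) : Prop :=
  (forall a b, adj G a b = adj H a b) /\
  (forall a c b, immorality G a c b = immorality H a c b).

Definition full_graph (G : DAG) : Prop := forall a b, a != b -> adj G a b.

Definition upsb (p : N * {set N}) : bool := (p.2 != set0) && (p.1 \notin p.2).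
Definition Upsilon := {p : N * {set N} | upsb p}.

Variable R : realFieldType.

Definition vec := Upsilon -> R.

Definition eta (G : DAG) : vec :=
  fun i => if pa G (val i).1 == (val i).2 then 1 else 0.

Definition dot (o v : vec) : R := \sum_(i : Upsilon) o i * v i.

Definition conv (D : {set DAG}) : vec -> Prop :=
  fun v => exists lam : DAG -> R,
    [/\ forall G, 0 <= lam G, forall G, G \notin D -> lam G = 0,
        \sum_(G : DAG) lam G = 1 &
        forall i, v i = \sum_(G : DAG) lam G * eta G i].

Definition P_N : vec -> Prop := conv setT.

Definition face_by (o : vec) (u : R) (F : vec -> Prop) : Prop :=
  (forall v, P_N v -> dot o v <= u) /\
  (forall v, F v <-> (P_N v /\ dot o v = u)).

Definition is_face (D : {set DAG}) : Prop :=
  exists o u, face_by o u (conv D).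

(* affine dimension of conv{eta_G : G in D}: the rank of the difference
   vectors eta_G - eta_G0 (G in D) for some G0 in D; -1 if D is empty *)
Definition diff_mx (D : {set DAG}) (G0 : DAG) :
  'M[R]_(#|{: DAG}|, #|{: Upsilon}|) :=
  \matrix_(i, j) (if enum_val i \in D
                  then eta (enum_val i) (enum_val j) - eta G0 (enum_val j)
                  else 0).

Definition affdim (D : {set DAG}) : int :=
  if [pick G in D] is Some G0 then (\rank (diff_mx D G0))%:Z else (-1)%R.

Definition is_facet (D : {set DAG}) : Prop :=
  is_face D /\ affdim D = affdim setT - 1.

Definition SE_objective (o : vec) : Prop :=
  forall G H, markov_equiv G H -> dot o (eta G) = dot o (eta H).

Definition is_SE (D : {set DAG}) : Prop :=
  exists o u, SE_objective o /\ face_by o u (conv D).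

Definition closed_under_ME (D : {set DAG}) : Prop :=
  forall G H, markov_equiv G H -> G \in D -> H \in D.

Definition contains_full (D : {set DAG}) : Prop :=
  forall G, full_graph G -> G \in D.

End DAGs.

(* If D contains the full graphs, compare two full graphs that differ only by
   reversing an arrow a -> b whose endpoints share the parents C: equality of
   their scores gives the local identity
     s(a|C) + s(b|C+a) = s(b|C) + s(a|C+b)
   for the family scores s of the facet normal. Moebius inversion of the scores
   of linear orders then writes the score of any G as sum_T m(T) c_G(T), where
   c_G is the characteristic imset, a Markov equivalence invariant; hence the
   normal is SE, and SE faces are closed under Markov equivalence.
   Conversely, if the facet D is closed, every objective constant on D is a
   multiple of its normal, which forces each family (y|B) to occur in D. Then a
   graph of D with the most arrows is full: a missing arrow x -> y can be added
   by exchanging the parents of y with a graph of D where they are x + pa(y),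
   which keeps eta_G + eta_H fixed. All full graphs are Markov equivalent. *)

From mathcomp Require Import all_boot all_order all_algebra.
From mathcomp Require Import zify ring lra.
Set Implicit Arguments. Unset Strict Implicit. Unset Printing Implicit Defensive.
Import Order.TTheory GRing.Theory Num.Theory.

Lemma ltn_mulD_lex a b rx ry n : (rx < n)%N -> (ry < n)%N ->
  (a * n + rx < b * n + ry)%N = (a < b)%N || ((a == b) && (rx < ry)%N).
Proof.
move=> ltxn ltyn; case: (ltngtP a b) => [lt_ab|lt_ba|->]; last by rewrite ltn_add2l.
- have le_ab : (a * n + n <= b * n)%N by rewrite -mulSnr leq_mul2r lt_ab orbT.
  by apply: leq_trans (leq_trans le_ab (leq_addr _ _)); rewrite ltn_add2l.
- apply/negbTE; rewrite -leqNgt.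
  have le_ba : (b * n + n <= a * n)%N by rewrite -mulSnr leq_mul2r lt_ba orbT.
  by apply: leq_trans (leq_trans le_ba (leq_addr _ _)); rewrite ltnW // ltn_add2l.
Qed.

Section DAGs.
Variable N : finType.
Implicit Types (G H : DAG N) (g : graph N).

Lemma DAG_acyclic G x y : arrow (val G) x y -> ~~ connect (arrow (val G)) y x.
Proof. by case: G => g /= /forallP /(_ x) /forallP /(_ y) /implyP. Qed.

Lemma notin_pa G a : a \notin pa G a.
Proof. by apply/negP => /DAG_acyclic; rewrite connect0. Qed.

Lemma adj_irr G a : adj G a a = false.
Proof. by rewrite /adj orbb (negbTE (notin_pa G a)). Qed.

Lemma connect_antisym G x y :
  x != y -> connect (arrow (val G)) x y -> ~~ connect (arrow (val G)) y x.
Proof.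
move=> neq_xy /connectP [[|z p] /= Gp eq_y]; first by rewrite eq_y eqxx in neq_xy.
case/andP: Gp => Gxz Gp; apply/negP; rewrite eq_y => Gyx.
have Gzy : connect (arrow (val G)) z (last z p) by apply/connectP; exists p.
by move: (DAG_acyclic Gxz); rewrite (connect_trans Gzy Gyx).
Qed.

Lemma acyclicb_rank g (h : N -> nat) :
  (forall x y, arrow g x y -> (h x < h y)%N) -> acyclicb g.
Proof.
move=> h_mono; have path_le y p : path (arrow g) y p -> (h y <= h (last y p))%N.
  elim: p y => [|z p IHp] y //= /andP [gyz gp].
  exact: leq_trans (ltnW (h_mono _ _ gyz)) (IHp _ gp).
apply/forallP => x; apply/forallP => y; apply/implyP => gxy.
apply/negP => /connectP [p gp yx].
by move: (path_le _ _ gp); rewrite -yx leqNgt h_mono.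
Qed.

Definition mkDAG g (acyc_g : acyclicb g) : DAG N := exist _ g acyc_g.

Lemma DAG_ext G H : (forall a, pa G a = pa H a) -> G = H.
Proof. by move=> eq_pa; apply: val_inj; apply/ffunP. Qed.

Lemma markov_equiv_sym G H : markov_equiv G H -> markov_equiv H G.
Proof. by case=> eq_adj eq_imm; split=> *; rewrite ?eq_adj ?eq_imm. Qed.

Lemma full_markov_equiv G H : full_graph G -> full_graph H -> markov_equiv G H.
Proof.
move=> fullG fullH; split=> [a b | a c b].
  by have [->|neq_ab] := eqVneq a b; rewrite ?adj_irr // fullG // fullH.
rewrite /immorality; have [->|neq_ab] := eqVneq a b; first by rewrite !andbF.
by rewrite fullG // fullH // !andbF.
Qed.

(* Full graphs from a layering [cls]: each vertex is a parent of all vertices of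
   higher layers, and ties within a layer are broken by [enum_rank]. *)
Definition layer_key (cls : N -> nat) (x : N) : nat := cls x * #|N| + enum_rank x.

Lemma layer_key_lt cls x y : (layer_key cls x < layer_key cls y)%N =
  (cls x < cls y)%N || ((cls x == cls y) && (enum_rank x < enum_rank y)%N).
Proof. by rewrite ltn_mulD_lex. Qed.

Lemma layer_key_inj cls : injective (layer_key cls).
Proof.
move=> x y /(congr1 (modn^~ #|N|)); rewrite !modnMDl !modn_small ?ltn_ord //.
by move/val_inj/enum_rank_inj.
Qed.

Definition layered_graph cls : graph N :=
  [ffun x => [set y | layer_key cls y < layer_key cls x]%N].

Lemma layered_acyclic cls : acyclicb (layered_graph cls).
Proof. by apply: (acyclicb_rank (h := layer_key cls)) => x y; rewrite /arrow ffunE inE. Qed.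

Definition layered cls := mkDAG (layered_acyclic cls).

Lemma pa_layered cls x y :
  (y \in pa (layered cls) x) = (layer_key cls y < layer_key cls x)%N.
Proof. by rewrite /pa ffunE inE. Qed.

Lemma full_layered cls : full_graph (layered cls).
Proof.
move=> a b neq_ab; rewrite /adj !pa_layered.
by case: ltngtP => // /layer_key_inj eq_ab; rewrite eq_ab eqxx in neq_ab.
Qed.

Lemma pa_layered_single cls x : (forall z, cls z = cls x -> z = x) ->
  pa (layered cls) x = [set z | cls z < cls x]%N.
Proof.
move=> single_x; apply/setP => z; rewrite pa_layered layer_key_lt inE.
by case: eqP => [/single_x -> | _]; rewrite ?ltnn ?andbF ?orbF.
Qed.

Lemma pa_layered_eq cls1 cls2 x :
    (forall z, (cls1 z < cls1 x)%N = (cls2 z < cls2 x)%N) ->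
    (forall z, (cls1 z == cls1 x) = (cls2 z == cls2 x)) ->
  pa (layered cls1) x = pa (layered cls2) x.
Proof. by move=> eq_lt eq_eq; apply/setP => z; rewrite !pa_layered !layer_key_lt eq_lt eq_eq. Qed.

Definition set_pa g y (P : {set N}) : graph N := [ffun z => if z == y then P else g z].

Lemma arrow_set_pa g y P p q :
  arrow (set_pa g y P) p q = if q == y then p \in P else arrow g p q.
Proof. by rewrite /arrow ffunE; case: ifP. Qed.

Lemma acyclicb_sub G g : (forall z, g z \subset val G z) -> acyclicb g.
Proof.
move=> sub_g; have gG : subrel (arrow g) (arrow (val G)).
  by move=> a b; apply: (subsetP (sub_g b)).
have /connect_sub conn_gG : subrel (arrow g) (connect (arrow (val G))).
  by move=> a b /gG /connect1.
apply/forallP => p; apply/forallP => q; apply/implyP => gpq.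
exact: contra (@conn_gG q p) (DAG_acyclic (gG _ _ gpq)).
Qed.

Lemma connect_add_arrow G x y a b :
  connect (arrow (set_pa (val G) y (x |: val G y))) a b ->
  connect (arrow (val G)) a b \/
  connect (arrow (val G)) a x /\ connect (arrow (val G)) y b.
Proof.
move=> /connectP [p + ->{b}]; elim: p a => [|z p IHp] a /=; first by left.
case/andP=> + /IHp; rewrite arrow_set_pa.
have old : arrow (val G) a z -> connect (arrow (val G)) z (last z p) \/
    connect (arrow (val G)) z x /\ connect (arrow (val G)) y (last z p) ->
  connect (arrow (val G)) a (last z p) \/
    connect (arrow (val G)) a x /\ connect (arrow (val G)) y (last z p).
  move=> Gaz [Gzp | [Gzx Gyp]]; [left | right; split=> //];
  exact: connect_trans (connect1 Gaz) _.
case: eqP => [eq_zy | _]; last exact: old.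
rewrite in_setU1 => /predU1P [-> | Gay]; last by apply: old; rewrite eq_zy.
by rewrite -eq_zy => -[|[_]] Gzp; right.
Qed.

Lemma acyclicb_add_arrow G x y : ~~ connect (arrow (val G)) y x ->
  acyclicb (set_pa (val G) y (x |: val G y)).
Proof.
move=> Gyx; apply/forallP => p; apply/forallP => q; apply/implyP => gpq.
apply/negP => /connect_add_arrow conn_qp.
have [Gpq | [eq_px eq_qy]] : arrow (val G) p q \/ p = x /\ q = y.
- move: gpq; rewrite arrow_set_pa; case: eqP => [-> | _]; last by left.
  by rewrite in_setU1 => /predU1P [->|]; [right | left].
- case: conn_qp => [Gqp | [Gqx Gyp]]; first by move: (DAG_acyclic Gpq); rewrite Gqp.
  by move: Gyx; rewrite (connect_trans Gyp (connect_trans (connect1 Gpq) Gqx)).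
- by subst p q; case: conn_qp => [Gyx' | [_ Gyx']]; rewrite Gyx' in Gyx.
Qed.

Definition narrows G : nat := \sum_a #|pa G a|.

Lemma exists_sink G (T : {set N}) a : a \in T ->
  exists2 b, b \in T & forall c, c \in T -> b \notin pa G c.
Proof.
move=> aT; pose anc b := #|[set z in T | connect (arrow (val G)) z b]|.
have [b bT max_b] := arg_maxnP anc aT; exists b => // c cT.
apply/negP => Gbc; have := max_b _ cT; apply/negP; rewrite -ltnNge.
apply: proper_card; apply/properP; split.
  apply/subsetP => z; rewrite !inE => /andP [-> Gzb] /=.
  exact: connect_trans Gzb (connect1 Gbc).
by exists c; rewrite !inE cT ?connect0 // (negbTE (DAG_acyclic Gbc)).
Qed.

End DAGs.

Section Polytope.
Variables (N : finType) (R : realFieldType).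
Local Open Scope ring_scope.
Implicit Types (G H : DAG N) (D : {set DAG N}) (o w : vec N R).

Definition family (a : N) (B : {set N}) (aB : upsb (a, B)) : Upsilon N := exist _ (a, B) aB.

Lemma eta_inj G H : eta R G =1 eta R H -> G = H.
Proof.
have pa_eq G1 G2 a : eta R G1 =1 eta R G2 -> pa G1 a != set0 -> pa G1 a = pa G2 a.
  move=> eq12 ne0; have aB : upsb (a, pa G1 a) by rewrite /upsb ne0 notin_pa.
  move: (eq12 (family aB)); rewrite /eta /= eqxx.
  by case: eqP => // _ /eqP; rewrite oner_eq0.
move=> eqGH; apply: DAG_ext => a.
have [paG0 | ] := eqVneq (pa G a) set0; last exact: pa_eq.
have [paH0 | ] := eqVneq (pa H a) set0; first by rewrite paG0 paH0.
by move/(pa_eq H G a) => -> // b; rewrite eqGH.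
Qed.

Lemma conv_eta D G : G \in D -> conv D (eta R G).
Proof.
move=> GD; exists (fun H => if H == G then 1 else 0); split.
- by move=> H; case: eqP.
- by move=> H; case: eqP => // ->; rewrite GD.
- by rewrite (bigD1 G) //= eqxx big1 ?addr0 // => H /negbTE->.
- move=> i; rewrite (bigD1 G) //= eqxx mul1r big1 ?addr0 // => H /negbTE->.
  by rewrite mul0r.
Qed.

Lemma P_N_eta G : P_N (eta R G).
Proof. exact: conv_eta (in_setT G). Qed.

Lemma convex_comb_indicator (I : finType) (lam : I -> R) (x : pred I) (c : bool) :
  (forall k, 0 <= lam k) -> \sum_k lam k = 1 ->
  \sum_k lam k * (if x k then 1 else 0) = (if c then 1 else 0) ->
  forall k, lam k != 0 -> x k = c.
Proof.
move=> lam_ge0 lam_sum comb k lam_k.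
have ind01 j : 0 <= (if x j then (1 : R) else 0) <= 1 by case: (x j); rewrite ?lexx ?ler01.
case: c comb => comb.
  have sum0 : \sum_j lam j * (1 - (if x j then 1 else 0)) = 0.
    rewrite (eq_bigr (fun j => lam j - lam j * (if x j then 1 else 0))).
      by rewrite sumrB lam_sum comb subrr.
    by move=> j _; rewrite mulrBr mulr1.
  have ge0 j : 0 <= lam j * (1 - (if x j then 1 else 0)).
    by case/andP: (ind01 j) => _; rewrite -subr_ge0; apply: mulr_ge0.
  move/eqP: (psumr_eq0P (fun j _ => ge0 j) sum0 (i := k) isT).
  by rewrite mulf_eq0 (negbTE lam_k) subr_eq0; case: (x k); rewrite // oner_eq0.
have ge0 j : 0 <= lam j * (if x j then 1 else 0).
  by case/andP: (ind01 j) => ind_ge0 _; apply: mulr_ge0.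
move/eqP: (psumr_eq0P (fun j _ => ge0 j) comb (i := k) isT).
by rewrite mulf_eq0 (negbTE lam_k); case: (x k); rewrite ?oner_eq0.
Qed.

Lemma conv_eta_mem D H : conv D (eta R H) -> H \in D.
Proof.
case=> lam [lam_ge0 lam_out lam_sum eta_H].
have lam_supp G : lam G != 0 -> G = H.
  move=> lamG; apply: eta_inj => i; rewrite /eta; congr (if _ then _ else _).
  apply: (convex_comb_indicator (x := fun K => pa K (val i).1 == (val i).2)) => //.
  exact: esym (eta_H i).
have lamH : lam H != 0.
  apply/eqP => lamH0; move/eqP: lam_sum; rewrite big1 ?(eq_sym 0) ?oner_eq0 // => G _.
  by have [// | /lam_supp eqGH] := eqVneq (lam G) 0; rewrite eqGH.
by apply: contraR lamH => /lam_out ->.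
Qed.

Section Face.
Variables (D : {set DAG N}) (o : vec N R) (u : R).
Hypothesis faceD : face_by o u (conv D).

Lemma face_dot_le G : dot o (eta R G) <= u.
Proof. by case: faceD => valid _; apply/valid/P_N_eta. Qed.

Lemma face_dot G : G \in D -> dot o (eta R G) = u.
Proof. by move=> GD; case: faceD => _ /(_ (eta R G)) [/(_ (conv_eta GD)) []]. Qed.

Lemma face_mem G : dot o (eta R G) = u -> G \in D.
Proof.
by move=> dotG; case: faceD => _ /(_ (eta R G)) [_ inD]; apply/conv_eta_mem/inD/(conj (P_N_eta G)).
Qed.

Lemma face_exchange G H G' H' : G \in D -> H \in D ->
  (forall i, eta R G i + eta R H i = eta R G' i + eta R H' i) -> G' \in D.
Proof.
move=> GD HD eq_eta; apply: face_mem.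
have : dot o (eta R G) + dot o (eta R H) = dot o (eta R G') + dot o (eta R H').
  by rewrite /dot -!big_split /=; apply: eq_bigr => i _; rewrite -!mulrDr eq_eta.
rewrite (face_dot GD) (face_dot HD).
by have := face_dot_le G'; have := face_dot_le H'; lra.
Qed.

End Face.

Definition empty_graph : graph N := [ffun _ => set0].

Lemma empty_acyclic : acyclicb empty_graph.
Proof. by apply: (acyclicb_rank (h := fun _ => 0%N)) => x y; rewrite /arrow ffunE inE. Qed.

Definition emptyDAG := mkDAG empty_acyclic.

Lemma eta_empty i : eta R emptyDAG i = 0.
Proof.
by case: i => -[a B] aB; case/andP: (aB) => B0 _; rewrite /eta /pa ffunE eq_sym (negbTE B0).
Qed.

Lemma family_acyclic (i : Upsilon N) : acyclicb (set_pa empty_graph (val i).1 (val i).2).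
Proof.
case: i => -[a B] /= /andP [_ aB]; apply: (acyclicb_rank (h := fun x => nat_of_bool (x == a))).
move=> x y; rewrite arrow_set_pa /arrow ffunE inE; case: eqP => // _ xB.
by case: eqP => // eq_xa; move: aB; rewrite -eq_xa xB.
Qed.

Definition family_DAG i := mkDAG (family_acyclic i).

Lemma eta_family_DAG i j : eta R (family_DAG i) j = if j == i then 1 else 0.
Proof.
case: i j => -[a B] aB [[b C] bC]; case/andP: (bC) => /= C0 _.
have -> : (exist _ (b, C) bC == exist _ (a, B) aB :> Upsilon N) = ((b, C) == (a, B)) by [].
rewrite /eta /pa ffunE /= xpair_eqE.
case: (b == a) => /=; first by rewrite eq_sym.
by rewrite ffunE eq_sym (negbTE C0).
Qed.

Definition rowv w : 'rV[R]_#|{: Upsilon N}| := \row_j w (enum_val j).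

Lemma rank_diff_mx_setT G0 : \rank (diff_mx R setT G0) = #|{: Upsilon N}|.
Proof.
apply/eqP; rewrite eqn_leq rank_leq_col -{1}(mxrank1 R #|{: Upsilon N}|) mxrankS //.
have row_diff G : (rowv (eta R G) - rowv (eta R G0) <= diff_mx R setT G0)%MS.
  apply: (eq_row_sub (enum_rank G)); apply/rowP => j.
  by rewrite !mxE enum_rankK in_setT.
apply/row_subP => k; rewrite row1.
have -> : 'e_k = (rowv (eta R (family_DAG (enum_val k))) - rowv (eta R G0))
    + (-1) *: (rowv (eta R emptyDAG) - rowv (eta R G0)).
  apply/rowP => j; rewrite !mxE eta_family_DAG eta_empty (inj_eq enum_val_inj).
  by case: (eqVneq j k) => [->|_]; rewrite ?eqxx /=; ring.
by apply: addmx_sub; [|apply: scalemx_sub]; apply: row_diff.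
Qed.

Lemma affdim_setT : affdim R [set: DAG N] = #|{: Upsilon N}|%:Z.
Proof.
rewrite /affdim; case: pickP => [G0 _ | /(_ emptyDAG)]; first by rewrite rank_diff_mx_setT.
by rewrite in_setT.
Qed.

Lemma card_Upsilon_gt0 : (2 <= #|N|)%N -> (0 < #|{: Upsilon N}|)%N.
Proof.
case/card_gt1P => x [y [_ _ neq_xy]].
have xy : upsb (x, [set y]).
  by rewrite /upsb /= in_set1 neq_xy andbT; apply/set0Pn; exists y; rewrite in_set1.
by apply/card_gt0P; exists (family xy).
Qed.

Lemma kermx_diff_mx D G0 w :
    (forall G, G \in D -> dot w (eta R G) = dot w (eta R G0)) ->
  (rowv w <= kermx (diff_mx R D G0)^T)%MS.
Proof.
move=> w_const; apply/sub_kermxP/rowP => k; rewrite !mxE.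
have [kD | kD] := boolP (enum_val k \in D); last first.
  by rewrite big1 // => j _; rewrite !mxE (negbTE kD) mulr0.
under eq_bigr do rewrite !mxE kD mulrBr.
rewrite sumrB -(big_enum_val (fun i => w i * eta R (enum_val k) i)).
rewrite -(big_enum_val (fun i => w i * eta R G0 i)).
by have := w_const _ kD; rewrite /dot => ->; rewrite subrr.
Qed.

Section Facet.
Variables (D : {set DAG N}) (o : vec N R) (u : R).
Hypothesis faceD : face_by o u (conv D).
Hypothesis dimD : affdim R D = affdim R [set: DAG N] - 1.
Hypothesis n_ge2 : (2 <= #|N|)%N.

Lemma facet_base :
  exists2 G0, G0 \in D & \rank (diff_mx R D G0) = (#|{: Upsilon N}| - 1)%N.
Proof.
have := card_Upsilon_gt0 n_ge2; move: dimD; rewrite affdim_setT /affdim.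
case: pickP => [G0 G0D | _]; last by move=> eq_dim gt0; exfalso; move: #|_| eq_dim gt0 => k; lia.
by move=> + gt0; rewrite subzn // => -[rkD]; exists G0.
Qed.

Lemma facet_normal_neq0 : exists i, o i != 0.
Proof.
have [i oi | o0] := pickP (fun i => o i != 0); first by exists i.
have [G0 G0D _] := facet_base.
have dot0 v : dot o v = 0 by rewrite /dot big1 // => i _; move/negbFE/eqP: (o0 i) ->; rewrite mul0r.
have DT : D = setT.
  by apply/setP => G; rewrite in_setT; apply: (face_mem faceD); rewrite -(face_dot faceD G0D) !dot0.
by move: dimD; rewrite DT => /eqP; rewrite -subr_eq0 opprB addrC subrK oner_eq0.
Qed.

Lemma facet_normal_unique w t :
  (forall G, G \in D -> dot w (eta R G) = t) -> exists a, forall i, w i = a * o i.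
Proof.
move=> w_const; have [G0 G0D rkD] := facet_base.
have ker_o : (rowv o <= kermx (diff_mx R D G0)^T)%MS.
  by apply: kermx_diff_mx => G GD; rewrite !(face_dot faceD).
have ker_w : (rowv w <= kermx (diff_mx R D G0)^T)%MS.
  by apply: kermx_diff_mx => G GD; rewrite !w_const.
have rk_ker : \rank (kermx (diff_mx R D G0)^T) = 1%N.
  rewrite mxrank_ker mxrank_tr rkD; have := card_Upsilon_gt0 n_ge2.
  by move: #|_| => k; lia.
have rk_o : \rank (rowv o) = 1%N.
  have [i oi] := facet_normal_neq0; apply/eqP; rewrite rank_rV eqb1.
  by apply: contra oi => /eqP/rowP/(_ (enum_rank i)); rewrite !mxE enum_rankK => ->.
have ker_sub : (kermx (diff_mx R D G0)^T <= rowv o)%MS.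
  by have := mxrank_leqif_sup ker_o; rewrite rk_o rk_ker => /leqif_refl.
have [a eq_w] := sub_rVP (submx_trans ker_w ker_sub).
by exists a => i; move/rowP/(_ (enum_rank i)): eq_w; rewrite !mxE enum_rankK.
Qed.

End Facet.

End Polytope.

Section ClosedFacet.
Variables (N : finType) (R : realFieldType).
Local Open Scope ring_scope.
Variables (D : {set DAG N}) (o : vec N R) (u : R).
Hypothesis faceD : face_by o u (conv D).
Hypothesis dimD : affdim R D = affdim R [set: DAG N] - 1.
Hypothesis n_ge2 : (2 <= #|N|)%N.
Hypothesis closedD : closed_under_ME D.

(* The indicator [w] of (y|B) vanishes on D, hence is a nonzero multiple of
   the facet normal; so D contains the full graphs in which y is a source,
   and by closedness the Markov equivalent full graph with pa y = B. *)
Lemma closed_facet_family y B (yB : upsb (y, B)) : exists2 H, H \in D & pa H y = B.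
Proof.
have [H /andP [HD /eqP paH] | noB] := pickP (fun H => (H \in D) && (pa H y == B)).
  by exists H.
pose w : vec N R := fun i => if i == family yB then 1 else 0.
have dot_w G : dot w (eta R G) = if pa G y == B then 1 else 0.
  rewrite /dot /w (bigD1 (family yB)) //= eqxx mul1r big1 ?addr0 // => i /negbTE ->.
  by rewrite mul0r.
have [a w_ao] : exists a, forall i, w i = a * o i.
  apply: (facet_normal_unique faceD dimD n_ge2 (t := 0)) => G GD.
  by rewrite dot_w; move: (noB G); rewrite GD /= => ->.
have dot_wo G : dot w (eta R G) = a * dot o (eta R G).
  by rewrite /dot mulr_sumr; apply: eq_bigr => i _; rewrite w_ao mulrA.
have a_neq0 : a != 0.
  by apply/eqP => a0; move: (w_ao (family yB)); rewrite /w eqxx a0 mul0r => /eqP; rewrite oner_eq0.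
have [G0 G0D _] := facet_base dimD n_ge2.
have u0 : u = 0.
  move: (dot_w G0); rewrite dot_wo (face_dot faceD G0D); move: (noB G0); rewrite G0D /= => ->.
  by move/eqP; rewrite mulf_eq0 (negbTE a_neq0) => /eqP.
have [/= B_neq0 y_notin_B] := andP yB.
pose K1 := layered (fun x => nat_of_bool (x != y)).
pose K2 := layered (fun x => if x \in B then 0 else if x == y then 1 else 2)%N.
have paK1 : pa K1 y = set0.
  rewrite pa_layered_single => [|z]; last by rewrite eqxx; case: eqP.
  by apply/setP => z; rewrite !inE eqxx ltn0.
have paK2 : pa K2 y = B.
  rewrite pa_layered_single => [|z /=]; last first.
    by rewrite (negbTE y_notin_B) eqxx; case: (z \in B) => //; case: eqP.
  by apply/setP => z; rewrite inE (negbTE y_notin_B) eqxx; case: (z \in B) => //; case: (z == y).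
have K1D : K1 \in D.
  apply: (face_mem faceD); apply/eqP; rewrite u0.
  have /eqP : a * dot o (eta R K1) = 0 by rewrite -dot_wo dot_w paK1 eq_sym (negbTE B_neq0).
  by rewrite mulf_eq0 (negbTE a_neq0).
have K2D : K2 \in D := closedD (full_markov_equiv (full_layered _) (full_layered _)) K1D.
by move: (noB K2); rewrite K2D paK2 eqxx.
Qed.

Lemma closed_facet_add_arrow G x y : G \in D -> x != y -> ~~ adj G x y ->
  ~~ connect (arrow (val G)) y x -> exists2 G', G' \in D & narrows G' = (narrows G).+1.
Proof.
move=> GD neq_xy nadj Gyx; have x_notin : x \notin pa G y by case/norP: nadj.
have yB : upsb (y, x |: pa G y).
  rewrite /upsb /= in_setU1 negb_or (eq_sym y) neq_xy notin_pa !andbT.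
  by apply/set0Pn; exists x; rewrite setU11.
have [H HD paH] := closed_facet_family yB; rewrite /pa in paH.
have subH z : set_pa (val H) y (pa G y) z \subset val H z.
  by rewrite ffunE; case: eqP => [-> | _] //; rewrite paH subsetUr.
pose G' := mkDAG (acyclicb_add_arrow Gyx); pose H' := mkDAG (acyclicb_sub subH).
exists G'.
  apply: (face_exchange faceD GD HD (H' := H')) => i.
  rewrite /eta /pa !ffunE; case: ((val i).1 =P y) => [-> | _] //.
  by rewrite paH addrC.
rewrite /narrows (bigD1 y) //= [in RHS](bigD1 y) //= /pa ffunE eqxx cardsU1 x_notin.
congr (_ + _)%N; apply: eq_bigr => z /negbTE neq_zy.
by rewrite ffunE neq_zy.
Qed.

Lemma closed_facet_full : contains_full D.
Proof.
have [G0 G0D _] := facet_base dimD n_ge2.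
have [G GD G_max] := arg_maxnP (@narrows N) G0D.
suff fullG : full_graph G by move=> K fullK; apply: closedD (full_markov_equiv fullG fullK) GD.
move=> x y neq_xy; apply/negPn/negP => nadj.
wlog Gyx : x y neq_xy nadj / ~~ connect (arrow (val G)) y x.
  move=> max_arrow; have [Gyx | ] := boolP (connect (arrow (val G)) y x); last exact: max_arrow.
  apply: (max_arrow y x); first by rewrite eq_sym.
  - by rewrite /adj orbC.
  - by apply: connect_antisym Gyx; rewrite eq_sym.
have [G' G'D narrows_G'] := closed_facet_add_arrow GD neq_xy nadj Gyx.
by move: (G_max _ G'D); rewrite narrows_G' /= ltnn.
Qed.

End ClosedFacet.

Section Mobius.
Variables (T : finType) (V : zmodType) (F : {set T} -> V).
Local Open Scope ring_scope.
Implicit Types S U : {set T}.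

Fixpoint mobius_fuel (k : nat) S : V :=
  if k is k'.+1 then F S - \sum_(U : {set T} | U \proper S) mobius_fuel k' U else 0.

Lemma mobius_fuel_enough k j S : (#|S| < k)%N -> (#|S| < j)%N -> mobius_fuel k S = mobius_fuel j S.
Proof.
elim: k j S => // k IHk [|j] S // ltSk ltSj /=; congr (_ - _); apply: eq_bigr => U ltUS.
by apply: IHk; apply: leq_trans (proper_card ltUS) _; rewrite -ltnS.
Qed.

Lemma mobius_inversion :
  exists m : {set T} -> V, forall S, F S = \sum_(U : {set T} | U \subset S) m U.
Proof.
exists (mobius_fuel #|T|.+1) => S; rewrite (bigD1 S) //.
rewrite (eq_big (fun U => U \proper S) (mobius_fuel #|T|)) => [| U | U].
- by rewrite /= subrK.
- by rewrite properEneq andbC.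
move=> /andP [subUS neq_US]; have ltUT : (#|U| < #|T|)%N.
  by apply: leq_trans (max_card S); apply: proper_card; rewrite properEneq neq_US.
by apply: mobius_fuel_enough => //; apply: ltnW.
Qed.

End Mobius.

Section CharacteristicImset.
Variable N : finType.
Implicit Types (G H : DAG N) (T : {set N}).

Definition char_imset G T : nat := #|[set a in T | T :\ a \subset pa G a]|.

Lemma char_imset_le1 G T : (char_imset G T <= 1)%N.
Proof.
apply/card_le1_eqP => a b; rewrite !inE => /andP [aT paTa] /andP [bT paTb].
apply/eqP; apply/negPn/negP => neq_ba.
have ba : b \in pa G a by apply: (subsetP paTa); rewrite !inE neq_ba.
have ab : a \in pa G b by apply: (subsetP paTb); rewrite !inE (eq_sym a) neq_ba.
by move: (DAG_acyclic ba); rewrite connect1.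
Qed.

(* If a in T has T :\ a among its parents in G, then every sink b of T in H
   works for H: b is G-adjacent to each x in T, else x -> a <- b would be an
   immorality of G, hence of H, contradicting that b is a sink. *)
Lemma char_imset_gt0_markov_equiv G H T : markov_equiv G H ->
  (0 < char_imset G T)%N -> (0 < char_imset H T)%N.
Proof.
case=> eq_adj eq_imm /card_gt0P [a]; rewrite inE => /andP [aT paTa].
have [b bT b_sink] := exists_sink H aT.
apply/card_gt0P; exists b; rewrite inE bT; apply/subsetP => x.
rewrite !inE => /andP [neq_xb xT].
have pa_a z : z \in T -> z != a -> z \in pa G a.
  by move=> zT neq_za; apply: (subsetP paTa); rewrite !inE neq_za.
have adj_xb : adj G x b.
  have [eq_xa | neq_xa] := eqVneq x a.
    have neq_ba : b != a by rewrite -eq_xa eq_sym.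
    by rewrite /adj eq_xa pa_a ?orbT.
  have [eq_ba | neq_ba] := eqVneq b a; first by rewrite /adj eq_ba pa_a.
  apply/negPn/negP => nadj.
  have : immorality G x a b by rewrite /immorality !pa_a ?neq_xb.
  by rewrite eq_imm => /and4P [_ Hba _ _]; move: (b_sink _ aT); rewrite Hba.
by move: adj_xb; rewrite eq_adj /adj => /orP [// | /(negP (b_sink _ xT))].
Qed.

Lemma char_imset_markov_equiv G H T : markov_equiv G H -> char_imset G T = char_imset H T.
Proof.
move=> GH; have := char_imset_le1 G T; have := char_imset_le1 H T.
have := char_imset_gt0_markov_equiv (T := T) GH.
have := char_imset_gt0_markov_equiv (T := T) (markov_equiv_sym GH).
by move: (char_imset G T) (char_imset H T) => m n; lia.
Qed.

End CharacteristicImset.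

Section FamilyScores.
Variables (N : finType) (R : realFieldType).
Local Open Scope ring_scope.
Variable o : vec N R.

(* Junk value 0 when (a|B) is not an index of Upsilon, i.e. B is empty or a \in B. *)
Definition fam_score (a : N) (B : {set N}) : R :=
  if insub (a, B) : option (Upsilon N) is Some i then o i else 0.

Lemma fam_score_sum a B :
  fam_score a B = \sum_(i : Upsilon N) if val i == (a, B) then o i else 0.
Proof.
rewrite /fam_score; case: insubP => [i _ eq_i | not_ups].
  rewrite (bigD1 i) //= -eq_i eqxx big1 ?addr0 // => j neq_ji.
  by rewrite (inj_eq val_inj) (negbTE neq_ji).
by rewrite big1 // => j _; case: eqP => // eq_j; move: (valP j); rewrite eq_j (negbTE not_ups).
Qed.

Lemma dot_eta_fam_score (G : DAG N) : dot o (eta R G) = \sum_a fam_score a (pa G a).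
Proof.
under [RHS]eq_bigr do rewrite fam_score_sum.
rewrite exchange_big; apply: eq_bigr => i _.
rewrite (bigD1 (val i).1) //= big1 ?addr0 => [|a neq_a]; last first.
  by case: eqP => // eq_i; rewrite eq_i eqxx in neq_a.
case: i => -[a B] aB; rewrite /eta /= xpair_eqE eqxx /= eq_sym.
by case: eqP; rewrite ?mulr1 ?mulr0.
Qed.

Definition reversal_invariant : Prop :=
  forall (a b : N) (C : {set N}), a != b -> a \notin C -> b \notin C ->
  fam_score a C + fam_score b (a |: C) = fam_score b C + fam_score a (b |: C).

(* The score of the full graph over S whose order is given by [enum_rank]. *)
Definition order_score (S : {set N}) : R :=
  \sum_(x in S) fam_score x [set z in S | enum_rank z < enum_rank x]%N.

Lemma order_score_max (S : {set N}) x :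
    x \in S -> (forall z, z \in S -> enum_rank z <= enum_rank x)%N ->
  order_score S = fam_score x (S :\ x) + order_score (S :\ x).
Proof.
move=> xS x_max; rewrite /order_score (bigD1 x) //=; congr (fam_score _ _ + _).
  apply/setP => z; rewrite !inE.
  have [-> | neq_zx] /= := eqVneq z x; first by rewrite ltnn andbF.
  case zS: (z \in S) => //=; rewrite ltn_neqAle x_max // andbT.
  by apply: contra neq_zx => /eqP/val_inj/enum_rank_inj ->.
apply: eq_big => [z | z /andP [zS neq_zx]]; first by rewrite !inE andbC.
congr (fam_score _ _); apply/setP => v; rewrite !inE.
case: (eqVneq v x) => [-> | //] /=.
by rewrite xS ltnNge x_max.
Qed.

Hypothesis o_rev : reversal_invariant.

(* By induction on #|B|: if the maximal element x of a |: B is not a, reversal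
   invariance exchanges a and x on top of B :\ x. *)
Lemma fam_score_order_score (B : {set N}) a :
  a \notin B -> fam_score a B = order_score (a |: B) - order_score B.
Proof.
move: {2}#|B|.+1 (ltnSn #|B|) => k; elim: k B a => // k IHk B a ltBk aB.
have aS : a \in a |: B by rewrite setU11.
have [x xS x_max] := arg_maxnP (fun z => nat_of_ord (enum_rank z)) aS.
have {}xS : x \in a |: B := xS.
have {}x_max z : z \in a |: B -> (enum_rank z <= enum_rank x)%N := x_max z.
rewrite (order_score_max xS x_max); have [-> | neq_xa] := eqVneq x a.
  by rewrite setU1K // addrK.
have xB : x \in B by move: xS; rewrite in_setU1 (negbTE neq_xa).
set C := B :\ x.
have -> : (a |: B) :\ x = a |: C.
  by apply/setP => z; rewrite !inE; case: eqP => // ->; rewrite (negbTE neq_xa).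
have aC : a \notin C by rewrite !inE negb_and aB orbT.
have xC : x \notin C by rewrite !inE eqxx.
have ltCk : (#|C| < k)%N by move: ltBk; rewrite (cardsD1 x B) xB.
have IHC : order_score (a |: C) = fam_score a C + order_score C.
  by rewrite (IHk C a ltCk aC) subrK.
have neq_ax : a != x by rewrite eq_sym.
have := o_rev neq_ax aC xC; rewrite /C setD1K // -/C.
by rewrite (order_score_max xB (fun z zB => x_max z (setU1r a zB))) IHC; lra.
Qed.

Lemma indicator_subset_setU1 (x : R) a (P T : {set N}) : a \notin P ->
  (if T \subset a |: P then x else 0) - (if T \subset P then x else 0)
  = if (a \in T) && (T :\ a \subset P) then x else 0.
Proof.
move=> aP; rewrite -subDset; have [aT | aT] /= := boolP (a \in T).
  by rewrite (contraNF (fun TP => subsetP TP a aT) aP) subr0.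
suff -> : T :\ a = T by rewrite subrr.
by apply/setP => z; rewrite !inE; case: eqP => // ->; rewrite (negbTE aT).
Qed.

Lemma reversal_invariant_SE : SE_objective o.
Proof.
have [m order_m] := mobius_inversion order_score.
have {}order_m S : order_score S = \sum_(T : {set N}) if T \subset S then m T else 0.
  by rewrite order_m big_mkcond.
have fam_char G a : fam_score a (pa G a) =
    \sum_(T : {set N}) if (a \in T) && (T :\ a \subset pa G a) then m T else 0.
  rewrite fam_score_order_score ?notin_pa // !order_m -sumrB.
  by apply: eq_bigr => T _; rewrite indicator_subset_setU1 ?notin_pa.
have dot_char G : dot o (eta R G) = \sum_(T : {set N}) m T *+ char_imset G T.
  rewrite dot_eta_fam_score (eq_bigr _ (fun a _ => fam_char G a)) exchange_big.
  apply: eq_bigr => T _; rewrite -big_mkcond /= -sumr_const.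
  by apply: eq_bigl => a; rewrite inE.
by move=> G H GH; rewrite !dot_char; apply: eq_bigr => T _; rewrite (char_imset_markov_equiv T GH).
Qed.

End FamilyScores.

Section FaceWithFullGraphs.
Variables (N : finType) (R : realFieldType).
Local Open Scope ring_scope.

(* Two full graphs in which C precedes a, b, which precede everything else,
   and whose orders differ only in the order of a and b. *)
Lemma face_full_reversal_invariant (D : {set DAG N}) (o : vec N R) u :
  face_by o u (conv D) -> contains_full D -> reversal_invariant o.
Proof.
move=> faceD fullD a b C neq_ab aC bC.
pose cls1 x := (if x \in C then 0 else if x == a then 1 else if x == b then 2 else 3)%N.
pose cls2 x := (if x \in C then 0 else if x == b then 1 else if x == a then 2 else 3)%N.
pose K1 := layered cls1; pose K2 := layered cls2.
have neq_ba : b != a by rewrite eq_sym.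
have paK1a : pa K1 a = C.
  rewrite pa_layered_single => [|z]; rewrite /cls1 (negbTE aC) eqxx.
    by apply/setP => z; rewrite inE; case: (z \in C); case: (z == a); case: (z == b).
  by case: (z \in C); case: (z =P a); case: (z == b).
have paK1b : pa K1 b = a |: C.
  rewrite pa_layered_single => [|z]; rewrite /cls1 (negbTE bC) (negbTE neq_ba) eqxx.
    by apply/setP => z; rewrite !inE; case: (z \in C); case: (z == a); case: (z == b).
  by case: (z \in C); case: (z == a); case: (z =P b).
have paK2b : pa K2 b = C.
  rewrite pa_layered_single => [|z]; rewrite /cls2 (negbTE bC) eqxx.
    by apply/setP => z; rewrite inE; case: (z \in C); case: (z == b); case: (z == a).
  by case: (z \in C); case: (z =P b); case: (z == a).
have paK2a : pa K2 a = b |: C.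
  rewrite pa_layered_single => [|z]; rewrite /cls2 (negbTE aC) (negbTE neq_ab) eqxx.
    by apply/setP => z; rewrite !inE; case: (z \in C); case: (z == b); case: (z == a).
  by case: (z \in C); case: (z == b); case: (z =P a).
have pa_rest x : (x != a) && (x != b) -> pa K1 x = pa K2 x.
  case/andP=> neq_xa neq_xb; apply: pa_layered_eq => z;
  rewrite /cls1 /cls2 (negbTE neq_xa) (negbTE neq_xb);
  by case: (x \in C); case: (z \in C); case: (z == a); case: (z == b).
have split_ab K : \sum_x fam_score o x (pa K x) = fam_score o a (pa K a) + fam_score o b (pa K b)
    + \sum_(x | (x != a) && (x != b)) fam_score o x (pa K x).
  by rewrite (bigD1 a) //= (bigD1 b) //= addrA.
have := face_dot faceD (fullD _ (full_layered cls1)).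
rewrite -(face_dot faceD (fullD _ (full_layered cls2))) !dot_eta_fam_score !split_ab.
rewrite paK1a paK1b paK2a paK2b (eq_bigr _ (fun x xab => congr1 _ (pa_rest x xab))).
by move=> eq_scores; lra.
Qed.

Lemma SE_closed_under_ME (D : {set DAG N}) : is_SE R D -> closed_under_ME D.
Proof.
case=> o [u [o_SE faceD]] G H GH GD.
by apply: (face_mem faceD); rewrite -(o_SE _ _ GH) (face_dot faceD GD).
Qed.

End FaceWithFullGraphs.

Theorem theorem1 (R : realFieldType) (N : finType) (D : {set DAG N}) :
  (2 <= #|N|)%N ->
  is_facet R D ->
  (closed_under_ME D <-> contains_full D) /\
  (contains_full D <-> is_SE R D).
Proof.
move=> n_ge2 [[o [u faceD]] dimD].
have full_SE : contains_full D -> is_SE R D.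
  move=> fullD; exists o, u; split=> //.
  exact/reversal_invariant_SE/(face_full_reversal_invariant faceD fullD).
have closed_full : closed_under_ME D -> contains_full D.
  exact: closed_facet_full faceD dimD n_ge2.
split; split=> //.
- by move=> /full_SE /SE_closed_under_ME.
- by move=> /SE_closed_under_ME /closed_full.
Qed.
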